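(* For every uniform preorder $(A,R)$, the indexed preorder $\mathsf{fam}(D(A,R))$ has existential quantification, and the singleton map $\eta:A\to PA$, $a\mapsto\{a\}$, is a monotone map from $(A,R)$ to $D(A,R)$. The induced indexed monotone map $\mathsf{fam}(\eta):\mathsf{fam}(A,R)\to\mathsf{fam}(D(A,R))$ is a primal $\exists$-completion.
   Context: A uniform preorder is a pair $(A,R)$ with $A$ a set and $R\subseteq P(A\times A)$ such that $\mathrm{id}_A\in R$, $s\circ r\in R$ whenever $r,s\in R$, and $s\in R$ whenever $r\in R$ and $s\subseteq r$. A monotone map $f:(A,R)\to(B,S)$ is a function $f:A\to B$ with $\{(fa,fa')\mid(a,a')\in r\}\in S$ for all $r\in R$. An indexed preorder is a pseudofunctor $\mathsf{Set}^{op}\to\mathsf{Ord}$; $\mathsf{fam}(A,R)$ is the indexed preorder $I\mapsto(A^I,\le)$ with $\varphi\le\psi$ iff $\{(\varphi i,\psi i)\mid i\in I\}\in R$, reindexing by precomposition; for monotone $f$, $\mathsf{fam}(f)$ is postcomposition with $f$. $D(A,R)=(PA,DR)$, where $PA$ is the powerset and $DR$ is the set of relations on $PA$ contained in some $[r]=\{(U,V)\in PA\times PA\mid\forall a\in U\,\exists b\in V.\,(a,b)\in r\}$ with $r\in R$. An indexed preorder $\mathcal{H}$ has existential quantification if each $u^*$ ($u:J\to I$) has a left adjoint $\exists_u$ satisfying Beck–Chevalley ($u^*\exists_v\cong\exists_{\bar v}\bar u^*$ for every pullback of $u$ and $v$ with projections $\bar u,\bar v$). An indexed monotone map $f:\mathcal{A}\to\mathcal{H}$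 into such $\mathcal{H}$ is an $\exists$-completion if for every $\mathcal{K}$ with existential quantification, precomposition with $f$ is an equivalence from the preorder of indexed monotone maps $\mathcal{H}\to\mathcal{K}$ commuting with $\exists$ (i.e. $g_I\exists_u\cong\exists_u g_J$) to the preorder of all indexed monotone maps $\mathcal{A}\to\mathcal{K}$. A predicate $\pi\in\mathcal{H}(I)$ is $\exists$-prime if for all $I\xleftarrow{u}J\xleftarrow{v}K$ and $\varphi\in\mathcal{H}(K)$ with $u^*\pi\le\exists_v\varphi$ there is a section $s$ of $v$ with $u^*\pi\le s^*\varphi$; $\mathsf{prim}(\mathcal{H})$ is the indexed sub-preorder of $\exists$-prime predicates; $\mathcal{H}$ has enough $\exists$-primes if every predicate is isomorphic to $\exists_u\pi$ for some $\exists$-prime $\pi$. A primal $\exists$-completion is an $\exists$-completion $e:\mathcal{A}\to\mathcal{H}$ such that $\mathcal{H}$ has enough $\exists$-prime predicates and $e$ is equivalent to the inclusion $\mathsf{prim}(\mathcal{H})\hookrightarrow\mathcal{H}$. *)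

From Stdlib Require Import Classical.

Set Implicit Arguments.
Unset Strict Implicit.

Definition rel (A : Type) := A -> A -> Prop.
(** [rcomp s r] is s ∘ r = {(a,c) | exists b, (a,b) ∈ r /\ (b,c) ∈ s}. *)
Definition rcomp {A : Type} (s r : rel A) : rel A :=
  fun a c => exists b, r a b /\ s b c.
Definition rsub {A : Type} (s r : rel A) : Prop := forall a b, s a b -> r a b.

Record UPreorder := {
  up_car :> Type;
  up_R : rel up_car -> Prop;
  up_id : up_R (@eq up_car);
  up_comp : forall r s, up_R r -> up_R s -> up_R (rcomp s r);
  up_down : forall r s, up_R r -> rsub s r -> up_R s
}.

Definition img {A B : Type} (f : A -> B) (r : rel A) : rel B :=
  fun b b' => exists a a', r a a' /\ f a = b /\ f a' = b'.

Definition monotone (P Q : UPreorder) (f : P -> Q) : Prop :=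
  forall r, @up_R P r -> @up_R Q (img f r).

Definition bracket {A : Type} (r : rel A) : rel (A -> Prop) :=
  fun U V => forall a, U a -> exists b, V b /\ r a b.

Definition DR (P : UPreorder) (t : rel (P -> Prop)) : Prop :=
  exists r : rel P, up_R r /\ rsub t (bracket r).

Lemma DR_id (P : UPreorder) : @DR P (@eq (P -> Prop)).
Proof.
  exists (@eq P); split; [apply up_id|].
  intros U V <- a Ha; exists a; auto.
Qed.

Lemma DR_comp (P : UPreorder) r s : @DR P r -> @DR P s -> @DR P (rcomp s r).
Proof.
  intros [r' [Hr Sr]] [s' [Hs Ss]]; exists (rcomp s' r'); split.
  - apply up_comp; assumption.
  - intros U W [V [HUV HVW]] a Ha.
    destruct (Sr _ _ HUV a Ha) as [b [Hb Hab]].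
    destruct (Ss _ _ HVW b Hb) as [c [Hc Hbc]].
    exists c; split; [assumption|exists b; auto].
Qed.

Lemma DR_down (P : UPreorder) r s : @DR P r -> rsub s r -> @DR P s.
Proof.
  intros [r' [Hr Sr]] Hsr; exists r'; split; [assumption|].
  intros U V H; apply Sr, Hsr, H.
Qed.

Definition D (P : UPreorder) : UPreorder :=
  {| up_car := P -> Prop; up_R := @DR P; up_id := DR_id P;
     up_comp := @DR_comp P; up_down := @DR_down P |}.

Definition eta (P : UPreorder) : P -> D P := fun a => fun x => x = a.

(** * Indexed preorders: pseudofunctors Set^op -> Ord (index sets are types) *)
Unset Implicit Arguments.
Record IdxPreorder := {
  ip_car :> Type -> Type;
  ip_le : forall I, ip_car I -> ip_car I -> Prop;
  ip_refl : forall I x, ip_le I x x;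
  ip_trans : forall I x y z, ip_le I x y -> ip_le I y z -> ip_le I x z;
  ip_re : forall I J (u : J -> I), ip_car I -> ip_car J;
  ip_re_mono : forall I J (u : J -> I) x y,
      ip_le I x y -> ip_le J (ip_re I J u x) (ip_re I J u y);
  ip_re_id : forall I x,
      ip_le I (ip_re I I (fun i : I => i) x) x /\ ip_le I x (ip_re I I (fun i : I => i) x);
  ip_re_comp : forall I J K (u : J -> I) (v : K -> J) x,
      ip_le K (ip_re I K (fun k => u (v k)) x) (ip_re J K v (ip_re I J u x)) /\
      ip_le K (ip_re J K v (ip_re I J u x)) (ip_re I K (fun k => u (v k)) x)
}.

Set Implicit Arguments.
Arguments ip_le {_ _} _ _.
Arguments ip_re {_ _ _} _ _.

Definition iso {H : IdxPreorder} {I : Type} (x y : H I) : Prop :=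
  ip_le x y /\ ip_le y x.

Definition fam_le (P : UPreorder) (I : Type) (phi psi : I -> P) : Prop :=
  @up_R P (fun a b => exists i, phi i = a /\ psi i = b).

Lemma fam_refl (P : UPreorder) I (x : I -> P) : fam_le x x.
Proof.
  apply (up_down (up_id P)). intros a b [i [<- <-]]; reflexivity.
Qed.

Lemma fam_trans (P : UPreorder) I (x y z : I -> P) :
  fam_le x y -> fam_le y z -> fam_le x z.
Proof.
  intros Hxy Hyz. apply (up_down (up_comp Hxy Hyz)).
  intros a c [i [<- <-]]. exists (y i); split; exists i; auto.
Qed.

Lemma fam_re_mono (P : UPreorder) I J (u : J -> I) (x y : I -> P) :
  fam_le x y -> fam_le (fun j => x (u j)) (fun j => y (u j)).
Proof.
  intros H; apply (up_down H). intros a b [j [<- <-]]; exists (u j); auto.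
Qed.

Definition fam (P : UPreorder) : IdxPreorder.
Proof.
  refine {| ip_car := fun I => I -> P;
            ip_le := @fam_le P;
            ip_refl := @fam_refl P;
            ip_trans := @fam_trans P;
            ip_re := fun I J u x => fun j => x (u j);
            ip_re_mono := @fam_re_mono P |}.
  - intros I x; split; apply fam_refl.
  - intros I J K u v x; split; apply fam_refl.
Defined.

Definition fam_map (P Q : UPreorder) (f : P -> Q) :
  forall I, fam P I -> fam Q I := fun I phi => fun i => f (phi i).

Definition idx_map (H K : IdxPreorder) := forall I, H I -> K I.

Definition is_idx_mono (H K : IdxPreorder) (f : idx_map H K) : Prop :=
  (forall I (x y : H I), ip_le x y -> ip_le (f I x) (f I y)) /\
  (forall I J (u : J -> I) (x : H I), iso (f J (ip_re u x)) (ip_re u (f I x))).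

Definition map_le (H K : IdxPreorder) (f g : idx_map H K) : Prop :=
  forall I (x : H I), ip_le (f I x) (g I x).

Definition map_iso (H K : IdxPreorder) (f g : idx_map H K) : Prop :=
  map_le f g /\ map_le g f.

Definition map_comp (A H K : IdxPreorder) (g : idx_map H K) (f : idx_map A H)
  : idx_map A K := fun I x => g I (f I x).

Definition is_pullback (I J K P : Type) (u : J -> I) (v : K -> I)
  (pv : P -> J) (pu : P -> K) : Prop :=
  (forall p, u (pv p) = v (pu p)) /\
  (forall j k, u j = v k -> exists! p, pv p = j /\ pu p = k).

Unset Implicit Arguments.
Record ExQuant (H : IdxPreorder) := {
  ex : forall I J (u : J -> I), H J -> H I;
  ex_adj : forall I J (u : J -> I) (x : H J) (y : H I),
      @ip_le H I (ex I J u x) y <-> @ip_le H J x (@ip_re H I J u y);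
  (** Beck–Chevalley: u^* ∃_v ≅ ∃_{v̄} ū^*, where v̄ = pv, ū = pu *)
  ex_bc : forall I J K P (u : J -> I) (v : K -> I) (pv : P -> J) (pu : P -> K),
      is_pullback u v pv pu ->
      forall x : H K, @iso H J (@ip_re H I J u (ex I K v x)) (ex J P pv (@ip_re H K P pu x))
}.

Set Implicit Arguments.
Arguments ex {_} _ {_ _} _ _.

Definition has_ex_quant (H : IdxPreorder) : Prop := inhabited (ExQuant H).

Definition commutes_ex (H K : IdxPreorder) (EH : ExQuant H) (EK : ExQuant K)
  (g : idx_map H K) : Prop :=
  forall I J (u : J -> I) (x : H J), iso (g I (ex EH u x)) (ex EK u (g J x)).

(** f : A -> H is an ∃-completion: precomposition with f is an equivalence
    (monotone, order-reflecting, essentially surjective) from ∃-preserving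
    indexed monotone maps H -> K to all indexed monotone maps A -> K. *)
Definition is_ex_completion (A H : IdxPreorder) (EH : ExQuant H)
  (f : idx_map A H) : Prop :=
  is_idx_mono f /\
  forall (K : IdxPreorder) (EK : ExQuant K),
    (forall g g' : idx_map H K,
        is_idx_mono g -> commutes_ex EH EK g ->
        is_idx_mono g' -> commutes_ex EH EK g' ->
        (map_le (map_comp g f) (map_comp g' f) <-> map_le g g')) /\
    (forall h : idx_map A K, is_idx_mono h ->
        exists g : idx_map H K,
          is_idx_mono g /\ commutes_ex EH EK g /\ map_iso (map_comp g f) h).

Definition is_ex_prime (H : IdxPreorder) (EH : ExQuant H) (I : Type) (pi : H I)
  : Prop :=
  forall J K (u : J -> I) (v : K -> J) (phi : H K),
    ip_le (ip_re u pi) (ex EH v phi) ->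
    exists s : J -> K, (forall j, v (s j) = j) /\ ip_le (ip_re u pi) (ip_re s phi).

Definition enough_ex_primes (H : IdxPreorder) (EH : ExQuant H) : Prop :=
  forall I (phi : H I), exists (J : Type) (u : J -> I) (pi : H J),
    is_ex_prime EH pi /\ iso phi (ex EH u pi).

(** f : A -> H is equivalent (over H) to the inclusion prim(H) ↪ H:
    there is an indexed map k : A -> prim(H) with incl ∘ k ≅ f which is an
    equivalence, i.e. pointwise order-reflecting and essentially surjective. *)
Definition equiv_to_prim_incl (A H : IdxPreorder) (EH : ExQuant H)
  (f : idx_map A H) : Prop :=
  exists k : forall I, A I -> { pi : H I | is_ex_prime EH pi },
    (forall I (x : A I), iso (f I x) (proj1_sig (k I x))) /\
    (forall I (x y : A I),
        ip_le (proj1_sig (k I x)) (proj1_sig (k I y)) -> ip_le x y) /\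
    (forall I (pi : H I), is_ex_prime EH pi ->
        exists x : A I, iso (proj1_sig (k I x)) pi).

Definition is_primal_ex_completion (A H : IdxPreorder) (EH : ExQuant H)
  (f : idx_map A H) : Prop :=
  is_ex_completion EH f /\ enough_ex_primes EH /\ equiv_to_prim_incl EH f.

(** In [fam (D P)] the left adjoint of reindexing along [u] is the union of a
    family along the fibres of [u], and every family [phi] is the union of the
    singleton family indexed by its elements [(i, a)] with [a ∈ phi i].
    Singleton families are ∃-prime: covering a singleton by a union means
    choosing a member of the union, i.e. a section.  Hence an indexed monotone
    map [h] out of [fam P] extends uniquely, up to isomorphism, to an
    ∃-preserving map [phi ↦ ∃_(index) h(points)], and up to isomorphism the
    ∃-primes are exactly the singleton families. *)
From Stdlib Require Import ClassicalEpsilon FunctionalExtensionality ProofIrrelevance.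

Set Implicit Arguments.
Unset Strict Implicit.

Section ExQuantTheory.
Variables (H : IdxPreorder) (E : ExQuant H).

Lemma iso_refl I (x : H I) : iso x x.
Proof. split; apply ip_refl. Qed.

Lemma iso_sym I (x y : H I) : iso x y -> iso y x.
Proof. intros [Hxy Hyx]; split; assumption. Qed.

Lemma iso_trans I (x y z : H I) : iso x y -> iso y z -> iso x z.
Proof. intros [Hxy Hyx] [Hyz Hzy]; split; eapply ip_trans; eauto. Qed.

Lemma ex_unit I J (u : J -> I) (x : H J) : ip_le x (ip_re u (ex E u x)).
Proof. apply (ex_adj _ E), ip_refl. Qed.

Lemma ex_mono I J (u : J -> I) (x y : H J) :
  ip_le x y -> ip_le (ex E u x) (ex E u y).
Proof. intros Hxy; apply (ex_adj _ E); eapply ip_trans; [exact Hxy | apply ex_unit]. Qed.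

Lemma ex_le_ex_along I X Y (uX : X -> I) (uY : Y -> I) (t : X -> Y)
    (x : H X) (y : H Y) :
  (forall z, uY (t z) = uX z) -> ip_le x (ip_re t y) -> ip_le (ex E uX x) (ex E uY y).
Proof.
  intros Hu Hxy; apply (ex_adj _ E).
  replace uX with (fun z => uY (t z)) by (apply functional_extensionality; auto).
  eapply ip_trans; [exact Hxy |].
  eapply ip_trans; [apply ip_re_mono, ex_unit |].
  apply (proj2 (ip_re_comp _ _ _ _ _ _ _)).
Qed.

Lemma ex_comp_iso I J L (w : J -> I) (u : L -> J) (x : H L) :
  iso (ex E (fun z => w (u z)) x) (ex E w (ex E u x)).
Proof.
  split.
  - apply ex_le_ex_along with (t := u); [reflexivity | apply ex_unit].
  - apply (ex_adj _ E), (ex_adj _ E).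
    eapply ip_trans; [apply ex_unit | apply (proj1 (ip_re_comp _ _ _ _ _ _ _))].
Qed.

Lemma ex_id_iso I (x : H I) : iso (ex E (fun i => i) x) x.
Proof.
  split.
  - apply (ex_adj _ E), (proj2 (ip_re_id _ _ _)).
  - eapply ip_trans; [apply ex_unit | apply (proj1 (ip_re_id _ _ _))].
Qed.

Lemma ex_unique (E' : ExQuant H) I J (u : J -> I) (x : H J) :
  iso (ex E u x) (ex E' u x).
Proof.
  split; [apply (ex_adj _ E), (ex_adj _ E') | apply (ex_adj _ E'), (ex_adj _ E)];
    apply ip_refl.
Qed.

End ExQuantTheory.

Lemma fam_le_of_eq (P : UPreorder) I (x y : I -> P) :
  (forall i, x i = y i) -> @ip_le (fam P) I x y.
Proof.
  intros Hxy; apply (up_down (up_id P)); intros a b [i [<- <-]]; auto.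
Qed.

Section FamD.
Variable P : UPreorder.

Lemma fam_D_leP I (phi psi : I -> P -> Prop) :
  @ip_le (fam (D P)) I phi psi <->
  exists r, up_R r /\ forall i a, phi i a -> exists b, psi i b /\ r a b.
Proof.
  split; intros [r [Hr Hsub]]; exists r; split; auto.
  - intros i; exact (Hsub _ _ (ex_intro _ i (conj eq_refl eq_refl))).
  - intros U V [i [<- <-]]; exact (Hsub i).
Qed.

Lemma fam_D_le_of_sub I (phi psi : I -> P -> Prop) :
  (forall i a, phi i a -> psi i a) -> @ip_le (fam (D P)) I phi psi.
Proof.
  intros Hsub; apply fam_D_leP; exists (@eq P); split; [apply up_id |].
  intros i a Ha; exists a; auto.
Qed.

Definition fam_union I J (u : J -> I) (phi : J -> P -> Prop) : I -> P -> Prop :=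
  fun i a => exists j, u j = i /\ phi j a.

Lemma fam_union_adj I J (u : J -> I) (phi : J -> P -> Prop) (psi : I -> P -> Prop) :
  @ip_le (fam (D P)) I (fam_union u phi) psi <-> @ip_le (fam (D P)) J phi (@ip_re (fam (D P)) _ _ u psi).
Proof.
  rewrite !fam_D_leP; split; intros [r [Hr Hsub]]; exists r; split; auto.
  - intros j a Ha; apply Hsub; exists j; auto.
  - intros i a [j [<- Ha]]; exact (Hsub j a Ha).
Qed.

Lemma fam_union_bc I J K Q (u : J -> I) (v : K -> I) (pv : Q -> J) (pu : Q -> K) :
  is_pullback u v pv pu ->
  forall phi : K -> P -> Prop,
    @iso (fam (D P)) J (@ip_re (fam (D P)) _ _ u (fam_union v phi))
      (fam_union pv (@ip_re (fam (D P)) _ _ pu phi)).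
Proof.
  intros [Hsq Huniv] phi; split; apply fam_D_le_of_sub.
  - intros j a [k [Hk Ha]].
    destruct (Huniv j k (eq_sym Hk)) as [q [[<- <-] _]].
    exists q; auto.
  - intros j a [q [<- Ha]]; exists (pu q); auto.
Qed.

Definition fam_D_exq : ExQuant (fam (D P)) :=
  Build_ExQuant (fam (D P)) fam_union fam_union_adj fam_union_bc.

Lemma ex_fam_D_iso (E : ExQuant (fam (D P))) I J (u : J -> I) (phi : J -> P -> Prop) :
  @iso (fam (D P)) I (ex E u phi) (fam_union u phi).
Proof. exact (ex_unique E fam_D_exq u phi). Qed.

Definition elt I (phi : I -> P -> Prop) := {i : I & {a : P | phi i a}}.
Definition elt_index I (phi : I -> P -> Prop) (z : elt phi) : I := projT1 z.
Definition elt_point I (phi : I -> P -> Prop) (z : elt phi) : P := proj1_sig (projT2 z).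

Lemma elt_point_mem I (phi : I -> P -> Prop) (z : elt phi) :
  phi (elt_index z) (elt_point z).
Proof. exact (proj2_sig (projT2 z)). Qed.

Lemma fam_union_points I (phi : I -> P -> Prop) :
  @iso (fam (D P)) I phi (fam_union (@elt_index I phi) (fam_map (@eta P) (@elt_point I phi))).
Proof.
  split; apply fam_D_le_of_sub.
  - intros i a Ha; exists (existT _ i (exist _ a Ha)); split; reflexivity.
  - intros i a [z [<- ->]]; apply elt_point_mem.
Qed.

Lemma ex_points_iso (E : ExQuant (fam (D P))) I (phi : I -> P -> Prop) :
  @iso (fam (D P)) I phi (ex E (@elt_index I phi) (fam_map (@eta P) (@elt_point I phi))).
Proof.
  eapply iso_trans; [apply fam_union_points | apply iso_sym, ex_fam_D_iso].
Qed.

Definition elt_reindex I J (v : J -> I) (phi : I -> P -> Prop)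
    (z : elt (fun j => phi (v j))) : elt phi :=
  existT _ (v (projT1 z)) (projT2 z).

Lemma elt_reindex_pullback I J (v : J -> I) (phi : I -> P -> Prop) :
  is_pullback v (@elt_index I phi) (@elt_index J _) (@elt_reindex I J v phi).
Proof.
  split; [reflexivity |].
  intros j [i [a Ha]] Hji; cbn in Hji; subst i.
  exists (existT _ j (exist _ a Ha)); split; [split; reflexivity |].
  intros [j' [a' Ha']] [Hj Hz]; cbn in Hj; subst j'.
  injection Hz as Ha'a; subst a'.
  rewrite (proof_irrelevance _ Ha Ha'); reflexivity.
Qed.

Lemma fam_eta_leP I (x y : I -> P) :
  @ip_le (fam (D P)) I (fam_map (@eta P) x) (fam_map (@eta P) y) <-> @ip_le (fam P) I x y.
Proof.
  rewrite fam_D_leP; split.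
  - intros [r [Hr Hsub]]; apply (up_down Hr); intros a b [i [<- <-]].
    destruct (Hsub i (x i) eq_refl) as [b [-> Hab]]; exact Hab.
  - intros Hxy; exists (fun a b => exists i, x i = a /\ y i = b); split; [exact Hxy |].
    intros i a ->; exists (y i); split; [reflexivity | exists i; auto].
Qed.

Lemma eta_monotone : monotone (@eta P).
Proof.
  intros r Hr; exists r; split; [exact Hr |].
  intros U V [a [a' [Haa' [<- <-]]]] b ->; exists a'; split; [reflexivity | exact Haa'].
Qed.

Lemma singletons_ex_prime (E : ExQuant (fam (D P))) I (x : I -> P) :
  is_ex_prime E (fam_map (@eta P) x).
Proof.
  intros J K u v phi Hcov.
  assert (Hunion : ip_le (ip_re u (fam_map (@eta P) x)) (fam_union v phi))
    by (eapply ip_trans; [exact Hcov | apply ex_fam_D_iso]).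
  apply fam_D_leP in Hunion as [r [Hr Hsub]].
  assert (Hpick : forall j, exists k, v k = j /\ exists b, phi k b /\ r (x (u j)) b).
  { intros j; destruct (Hsub j (x (u j)) eq_refl) as [b [[k [Hk Hb]] Hrb]].
    exists k; eauto. }
  destruct (choice _ Hpick) as [s Hs].
  exists s; split; [intros j; apply Hs |].
  apply fam_D_leP; exists r; split; [exact Hr |].
  intros j a ->; apply Hs.
Qed.

Lemma ex_prime_singletons (E : ExQuant (fam (D P))) I (pi : I -> P -> Prop) :
  is_ex_prime E pi -> exists x : I -> P, @iso (fam (D P)) I (fam_map (@eta P) x) pi.
Proof.
  intros Hprime.
  destruct (Hprime I _ (fun i => i) (@elt_index I pi) _ (proj1 (ex_points_iso E pi)))
    as [s [Hs Hle]].
  exists (fun i => elt_point (s i)); split; [| exact Hle].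
  apply fam_D_le_of_sub; intros i a ->.
  pose proof (elt_point_mem (s i)) as Hmem; rewrite Hs in Hmem; exact Hmem.
Qed.

End FamD.

Section Extension.
Variables (P : UPreorder) (K : IdxPreorder) (EK : ExQuant K).
Variable h : idx_map (fam P) K.
Hypothesis h_mono : is_idx_mono h.

Definition ex_ext : idx_map (fam (D P)) K :=
  fun I phi => ex EK (@elt_index P I phi) (h (@elt_point P I phi)).

Lemma ex_ext_le_along I X Y (uX : X -> I) (uY : Y -> I) (t : X -> Y)
    (pX : X -> P) (pY : Y -> P) :
  (forall z, uY (t z) = uX z) -> @ip_le (fam P) X pX (fun z => pY (t z)) ->
  ip_le (ex EK uX (h pX)) (ex EK uY (h pY)).
Proof.
  intros Hu Hp; apply ex_le_ex_along with (t := t); [exact Hu |].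
  eapply ip_trans; [apply (proj1 h_mono), Hp | apply (proj1 (proj2 h_mono _ _ t pY))].
Qed.

Lemma ex_ext_mono I (phi psi : I -> P -> Prop) :
  @ip_le (fam (D P)) I phi psi -> ip_le (ex_ext phi) (ex_ext psi).
Proof.
  intros Hle; apply fam_D_leP in Hle as [r [Hr Hsub]].
  assert (Hpick : forall z : elt phi,
             exists z' : elt psi, elt_index z' = elt_index z /\ r (elt_point z) (elt_point z')).
  { intros [i [a Ha]]; destruct (Hsub i a Ha) as [b [Hb Hab]].
    exists (existT _ i (exist _ b Hb)); split; [reflexivity | exact Hab]. }
  destruct (choice _ Hpick) as [t Ht].
  apply ex_ext_le_along with (t := t); [apply Ht |].
  apply (up_down Hr); intros a b [z [<- <-]]; apply Ht.
Qed.

Lemma ex_ext_re I J (v : J -> I) (phi : I -> P -> Prop) :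
  iso (ex_ext (fun j => phi (v j))) (ip_re v (ex_ext phi)).
Proof.
  destruct (ex_bc _ EK _ _ _ _ _ _ _ _ (elt_reindex_pullback v phi)
              (h (@elt_point P I phi))) as [Hbc1 Hbc2].
  destruct (proj2 h_mono _ _ (@elt_reindex P I J v phi) (@elt_point P I phi)) as [Hre1 Hre2].
  split.
  - eapply ip_trans; [apply ex_mono, Hre1 | exact Hbc2].
  - eapply ip_trans; [exact Hbc1 | apply ex_mono, Hre2].
Qed.

Lemma ex_ext_idx_mono : is_idx_mono ex_ext.
Proof. split; [exact ex_ext_mono | exact ex_ext_re]. Qed.

Lemma ex_ext_union I J (w : J -> I) (phi : J -> P -> Prop) :
  iso (ex_ext (fam_union w phi)) (ex EK w (ex_ext phi)).
Proof.
  eapply iso_trans; [| apply ex_comp_iso]; split.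
  - assert (Hpick : forall z : elt (fam_union w phi),
               exists z' : elt phi, w (elt_index z') = elt_index z /\ elt_point z' = elt_point z).
    { intros [i [a [j [Hj Ha]]]]; exists (existT _ j (exist _ a Ha)); split; [exact Hj | reflexivity]. }
    destruct (choice _ Hpick) as [t Ht].
    apply ex_ext_le_along with (t := t); [apply Ht |].
    apply fam_le_of_eq; intros z; symmetry; apply Ht.
  - apply ex_ext_le_along
      with (t := fun z : elt phi => existT (fun i => {a : P | fam_union w phi i a})
                  (w (elt_index z)) (exist _ (elt_point z) (ex_intro _ _ (conj eq_refl (elt_point_mem z))))).
    + reflexivity.
    + apply fam_le_of_eq; reflexivity.
Qed.

Lemma ex_ext_commutes_ex (E : ExQuant (fam (D P))) : commutes_ex E EK ex_ext.
Proof.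
  intros I J w phi; eapply iso_trans; [| apply ex_ext_union].
  destruct (ex_fam_D_iso E w phi); split; apply ex_ext_mono; assumption.
Qed.

Lemma ex_ext_eta : map_iso (map_comp ex_ext (fam_map (@eta P))) h.
Proof.
  split; intros I x; unfold map_comp, ex_ext.
  - eapply ip_trans; [| apply (ex_id_iso EK)].
    apply ex_ext_le_along with (t := @elt_index P I (fam_map (@eta P) x)); [reflexivity |].
    apply fam_le_of_eq; intros z; apply elt_point_mem.
  - eapply ip_trans; [apply (ex_id_iso EK) |].
    apply ex_ext_le_along with (t := fun i => existT (fun i => {a : P | eta (x i) a}) i
                                             (exist _ (x i) eq_refl)); [reflexivity |].
    apply fam_le_of_eq; reflexivity.
Qed.

End Extension.

Lemma ex_preserving_le_of_le_on_singletons (P : UPreorder) (E : ExQuant (fam (D P)))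
    (K : IdxPreorder) (EK : ExQuant K) (g g' : idx_map (fam (D P)) K) :
  is_idx_mono g -> commutes_ex E EK g -> is_idx_mono g' -> commutes_ex E EK g' ->
  map_le (map_comp g (fam_map (@eta P))) (map_comp g' (fam_map (@eta P))) -> map_le g g'.
Proof.
  intros [g_mono _] g_ex [g'_mono _] g'_ex Hle I phi.
  destruct (ex_points_iso E phi) as [Hpts1 Hpts2].
  destruct (g_ex _ _ (@elt_index P I phi) (fam_map (@eta P) (@elt_point P I phi))) as [Hg _].
  destruct (g'_ex _ _ (@elt_index P I phi) (fam_map (@eta P) (@elt_point P I phi))) as [_ Hg'].
  eapply ip_trans; [apply g_mono, Hpts1 |].
  eapply ip_trans; [exact Hg |].
  eapply ip_trans; [apply ex_mono, Hle |].
  eapply ip_trans; [exact Hg' | apply g'_mono, Hpts2].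
Qed.

Lemma fam_eta_idx_mono (P : UPreorder) : is_idx_mono (@fam_map P (D P) (@eta P)).
Proof.
  split; [intros I x y; apply fam_eta_leP |].
  intros I J u x; apply iso_refl.
Qed.

Lemma fam_eta_ex_completion (P : UPreorder) (E : ExQuant (fam (D P))) :
  is_ex_completion E (@fam_map P (D P) (@eta P)).
Proof.
  split; [apply fam_eta_idx_mono |].
  intros K EK; split.
  - intros g g' g_mono g_ex g'_mono g'_ex; split.
    + apply (ex_preserving_le_of_le_on_singletons g_mono g_ex g'_mono g'_ex).
    + intros Hle I x; apply Hle.
  - intros h h_mono; exists (ex_ext EK h); split; [| split].
    + apply ex_ext_idx_mono, h_mono.
    + apply ex_ext_commutes_ex, h_mono.
    + apply ex_ext_eta, h_mono.
Qed.

Lemma fam_D_enough_ex_primes (P : UPreorder) (E : ExQuant (fam (D P))) :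
  enough_ex_primes E.
Proof.
  intros I phi; exists (elt phi), (@elt_index P I phi), (fam_map (@eta P) (@elt_point P I phi)).
  split; [apply singletons_ex_prime | apply ex_points_iso].
Qed.

Lemma fam_eta_equiv_prim_incl (P : UPreorder) (E : ExQuant (fam (D P))) :
  equiv_to_prim_incl E (@fam_map P (D P) (@eta P)).
Proof.
  exists (fun I x => exist _ (fam_map (@eta P) x) (@singletons_ex_prime P E I x)).
  split; [| split].
  - intros I x; apply iso_refl.
  - intros I x y; apply fam_eta_leP.
  - intros I pi Hpi; destruct (ex_prime_singletons Hpi) as [x Hx]; exists x; exact Hx.
Qed.

Theorem proposition4p7 (P : UPreorder) :
  has_ex_quant (fam (D P)) /\
  @monotone P (D P) (@eta P) /\
  (forall EH : ExQuant (fam (D P)),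
      @is_primal_ex_completion (fam P) (fam (D P)) EH (@fam_map P (D P) (@eta P))).
Proof.
  split; [exact (inhabits (fam_D_exq P)) |].
  split; [apply eta_monotone |].
  intros E; split; [apply fam_eta_ex_completion |].
  split; [apply fam_D_enough_ex_primes | apply fam_eta_equiv_prim_incl].
Qed.
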